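(* For every $d\ge1$ and all nonnegative integers $k_1,\dots,k_d$, \[ \lim_{n\to\infty}\mathbb E\Bigl(\prod_{i=1}^d \bigl(X[n,i]\bigr)_{k_i}\Bigr)=1 . \]
   Context: Uniform random recursive tree: start at step $0$ with the tree $T_0$ consisting of the single vertex $0$ (the root). At step $n\ge1$, a vertex is chosen uniformly at random among the existing vertices $0,1,\dots,n-1$, independently of the past, and a new vertex $n$ is added and joined by an edge to the chosen vertex; $T_n$ is the resulting tree on vertices $0,\dots,n$. $\deg_n(i)$ is the degree of vertex $i$ in $T_n$, $L_n(1)$ is the set of neighbours of the root $0$ in $T_n$, and $X[n,d]=|\{i\in L_n(1):\deg_n(i)=d\}|$. For real $a$ and integer $k\ge0$, the falling factorial is $(a)_0=1$ and $(a)_k=a(a-1)\cdots(a-k+1)$ for $k\ge1$. *)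

From Stdlib Require Import Reals List Arith.
Import ListNotations.
Open Scope R_scope.

(* A history of the uniform random recursive tree up to step n is encoded by
   the list s = [c_1; ...; c_n] of chosen parents, c_j in {0,...,j-1};
   vertex j (1 <= j <= n) is joined to vertex c_j = nth (j-1) s 0. *)

(* All admissible choice sequences of length n (there are n! of them,
   each equally likely). *)
Fixpoint histories (n : nat) : list (list nat) :=
  match n with
  | O => [ [] ]
  | S m => flat_map (fun s => map (fun p => s ++ [p]) (seq 0 (S m))) (histories m)
  end.

Definition parent (s : list nat) (j : nat) : nat := nth (j - 1) s 0%nat.

Definition nonroot (n : nat) : list nat := seq 1 n.

Definition deg (n : nat) (s : list nat) (i : nat) : nat :=
  (length (filter (fun j => Nat.eqb (parent s j) i) (nonroot n))
   + (if Nat.eqb i 0 then 0 else 1))%nat.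

Definition rootNbrs (n : nat) (s : list nat) : list nat :=
  filter (fun j => Nat.eqb (parent s j) 0) (nonroot n).

Definition X (n : nat) (s : list nat) (d : nat) : nat :=
  length (filter (fun i => Nat.eqb (deg n s i) d) (rootNbrs n s)).

Fixpoint ffact (a : R) (k : nat) : R :=
  match k with
  | O => 1
  | S k' => ffact a k' * (a - INR k')
  end.

Fixpoint prod1 (d : nat) (f : nat -> R) : R :=
  match d with
  | O => 1
  | S d' => prod1 d' f * f d
  end.

Definition sumR (l : list R) : R := fold_right Rplus 0 l.

Definition expect (n : nat) (f : list nat -> R) : R :=
  sumR (map f (histories n)) / INR (fact n).

(* Let F_n(k) = E[ prod_{i=1}^d (X[n,i])_{k_i} ].  Given T_n, vertex n+1
   attaches to the root with probability 1/(n+1) (a new root neighbour of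
   degree 1), to a root neighbour of degree j with probability
   X[n,j]/(n+1) (that neighbour moves from degree j to j+1), and otherwise
   leaves the profile (X[n,i])_i unchanged.  The identities
   (a+1)_m = (a)_m + m (a)_{m-1} and a (a-1)_m = (a)_m (a-m) turn this into
     F_{n+1}(k) = F_n(k) + 1/(n+1) ( k_1 F_n(k - e_1)
                    + sum_j k_{j+1} F_n(k + e_j - e_{j+1}) - |k| F_n(k) ),
   where every other index vector on the right has smaller weight
   sum_i i k_i.  An averaging lemma (x_{n+1} = x_n + K/(n+1) (y_n - x_n)
   and y_n -> l imply x_n -> l) then gives F_n(k) -> 1 by induction on the
   weight. *)

From Stdlib Require Import Reals List Arith Lia Lra.
Import ListNotations.
Open Scope R_scope.

Lemma sumR_app (l1 l2 : list R) : sumR (l1 ++ l2) = sumR l1 + sumR l2.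
Proof. induction l1 as [|a l1 IH]; simpl; [ring | rewrite IH; ring]. Qed.

Lemma sumR_map_flat_map {A B} (f : B -> R) (g : A -> list B) (l : list A) :
  sumR (map f (flat_map g l)) = sumR (map (fun x => sumR (map f (g x))) l).
Proof.
  induction l as [|a l IH]; simpl; auto.
  rewrite map_app, sumR_app, IH. reflexivity.
Qed.

Lemma sumR_scal {A} (c : R) (f : A -> R) (l : list A) :
  sumR (map (fun x => c * f x) l) = c * sumR (map f l).
Proof. induction l as [|a l IH]; simpl; [ring | rewrite IH; ring]. Qed.

Lemma sumR_plus {A} (f g : A -> R) (l : list A) :
  sumR (map (fun x => f x + g x) l) = sumR (map f l) + sumR (map g l).
Proof. induction l as [|a l IH]; simpl; [ring | rewrite IH; ring]. Qed.

Lemma sumR_minus {A} (f g : A -> R) (l : list A) :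
  sumR (map (fun x => f x - g x) l) = sumR (map f l) - sumR (map g l).
Proof. induction l as [|a l IH]; simpl; [ring | rewrite IH; ring]. Qed.

Lemma sumR_ext_in {A} (f g : A -> R) (l : list A) :
  (forall x, In x l -> f x = g x) -> sumR (map f l) = sumR (map g l).
Proof. induction l as [|a l IH]; simpl; intros H; auto. rewrite H, IH; auto. Qed.

Lemma sumR_const {A} (c : R) (l : list A) :
  sumR (map (fun _ => c) l) = INR (length l) * c.
Proof.
  induction l as [|a l IH]; simpl length; [simpl; ring|].
  rewrite S_INR. simpl. rewrite IH. ring.
Qed.

Lemma sumR_if {A} (P : A -> bool) (a : A -> R) (b : R) (l : list A) :
  sumR (map (fun x => if P x then a x else b) l)
  = INR (length l) * b + sumR (map (fun x => a x - b) (filter P l)).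
Proof.
  induction l as [|x l IH]; simpl length; [simpl; ring|].
  rewrite S_INR. simpl. destruct (P x); simpl; rewrite IH; ring.
Qed.

Lemma expect_ext n (f g : list nat -> R) :
  (forall s, In s (histories n) -> f s = g s) -> expect n f = expect n g.
Proof. intros H. unfold expect. rewrite (sumR_ext_in f g); auto. Qed.

Lemma expect_plus n (f g : list nat -> R) :
  expect n (fun s => f s + g s) = expect n f + expect n g.
Proof. unfold expect. rewrite sumR_plus. field. apply INR_fact_neq_0. Qed.

Lemma expect_minus n (f g : list nat -> R) :
  expect n (fun s => f s - g s) = expect n f - expect n g.
Proof. unfold expect. rewrite sumR_minus. field. apply INR_fact_neq_0. Qed.

Lemma expect_scal n (c : R) (f : list nat -> R) :
  expect n (fun s => c * f s) = c * expect n f.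
Proof. unfold expect. rewrite sumR_scal. field. apply INR_fact_neq_0. Qed.

Lemma expect_S n (f : list nat -> R) :
  expect (S n) f =
  expect n (fun s => / INR (S n) * sumR (map (fun p => f (s ++ [p])) (seq 0 (S n)))).
Proof.
  unfold expect. cbn [histories]. rewrite sumR_map_flat_map, sumR_scal.
  rewrite (sumR_ext_in _ (fun s => sumR (map (fun p => f (s ++ [p])) (seq 0 (S n))))).
  2:{ intros x _. rewrite map_map. reflexivity. }
  replace (fact (S n)) with (S n * fact n)%nat by reflexivity.
  rewrite mult_INR. field. split; [apply not_0_INR; lia | apply INR_fact_neq_0].
Qed.

Lemma expect_one n : expect n (fun _ => 1) = 1.
Proof.
  induction n as [|n IH].
  - unfold expect. simpl. field.
  - rewrite expect_S. transitivity (expect n (fun _ => 1)); [|exact IH].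
    apply expect_ext. intros s _.
    rewrite sumR_const, length_seq. field. apply not_0_INR; lia.
Qed.

(** * One growth step: parents, degrees and root neighbours *)

Lemma history_valid n s : In s (histories n) ->
  length s = n /\ forall j, (1 <= j <= n)%nat -> (parent s j < j)%nat.
Proof.
  revert s; induction n as [|n IH]; intros s H.
  - simpl in H. destruct H as [<- | []]. split; auto. intros; lia.
  - cbn [histories] in H. apply in_flat_map in H. destruct H as [s0 [H0 H1]].
    apply in_map_iff in H1. destruct H1 as [p [<- Hp]]. apply in_seq in Hp.
    destruct (IH s0 H0) as [Hl Hv]. split.
    + rewrite length_app; simpl; lia.
    + intros j Hj. unfold parent. destruct (Nat.eq_dec j (S n)) as [->|Hne].
      * rewrite app_nth2 by lia.
        replace (S n - 1 - length s0)%nat with 0%nat by lia. simpl; lia.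
      * rewrite app_nth1 by lia. apply Hv; lia.
Qed.

Lemma parent_app n s p j : length s = n -> (1 <= j <= n)%nat ->
  parent (s ++ [p]) j = parent s j.
Proof. intros Hl Hj. unfold parent. rewrite app_nth1 by lia. reflexivity. Qed.

Lemma parent_last n s p : length s = n -> parent (s ++ [p]) (S n) = p.
Proof.
  intros Hl. unfold parent. rewrite app_nth2 by lia.
  replace (S n - 1 - length s)%nat with 0%nat by lia. reflexivity.
Qed.

Lemma deg_app n s p v : length s = n ->
  deg (S n) (s ++ [p]) v = (deg n s v + if Nat.eqb p v then 1 else 0)%nat.
Proof.
  intros Hl. unfold deg, nonroot. rewrite seq_S, filter_app, length_app.
  rewrite (filter_ext_in (fun j => Nat.eqb (parent (s ++ [p]) j) v)
                         (fun j => Nat.eqb (parent s j) v)).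
  2:{ intros a Ha. apply in_seq in Ha. rewrite (parent_app n) by (auto; lia). reflexivity. }
  simpl filter. replace (1 + n)%nat with (S n) by lia.
  rewrite (parent_last n) by auto. destruct (Nat.eqb p v); simpl; lia.
Qed.

Lemma rootNbrs_app n s p : length s = n ->
  rootNbrs (S n) (s ++ [p]) = rootNbrs n s ++ (if Nat.eqb p 0 then [S n] else []).
Proof.
  intros Hl. unfold rootNbrs, nonroot. rewrite seq_S, filter_app.
  rewrite (filter_ext_in (fun j => Nat.eqb (parent (s ++ [p]) j) 0)
                         (fun j => Nat.eqb (parent s j) 0)).
  2:{ intros a Ha. apply in_seq in Ha. rewrite (parent_app n) by (auto; lia). reflexivity. }
  simpl filter. replace (1 + n)%nat with (S n) by lia.
  rewrite (parent_last n) by auto. reflexivity.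
Qed.

(* The vertex n+1 is not yet present in T_n, hence it is a leaf. *)
Lemma deg_fresh n s : In s (histories n) -> deg n s (S n) = 1%nat.
Proof.
  intros H. destruct (history_valid n s H) as [_ Hv]. unfold deg, nonroot.
  rewrite (filter_ext_in _ (fun _ => false)), filter_false; [reflexivity|].
  intros j Hj. apply in_seq in Hj.
  apply Nat.eqb_neq. specialize (Hv j ltac:(lia)). lia.
Qed.

Lemma rootNbrs_in n s v : In v (rootNbrs n s) <-> In v (seq 1 n) /\ parent s v = 0%nat.
Proof. unfold rootNbrs, nonroot. rewrite filter_In, Nat.eqb_eq. tauto. Qed.

Lemma rootNbrs_nodup n s : NoDup (rootNbrs n s).
Proof. apply NoDup_filter, seq_NoDup. Qed.

Lemma deg_nonroot_pos n s v : v <> 0%nat -> (1 <= deg n s v)%nat.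
Proof. intros H. unfold deg. apply Nat.eqb_neq in H. rewrite H. lia. Qed.

Fixpoint sum1 (d : nat) (f : nat -> R) : R :=
  match d with O => 0 | S d' => sum1 d' f + f d end.

Fixpoint nsum (d : nat) (f : nat -> nat) : nat :=
  match d with O => 0%nat | S d' => (nsum d' f + f d)%nat end.

Lemma prod1_ext d (f g : nat -> R) :
  (forall i, (1 <= i <= d)%nat -> f i = g i) -> prod1 d f = prod1 d g.
Proof.
  induction d as [|d IH]; simpl; intros H; auto.
  rewrite IH by (intros; apply H; lia). rewrite H by lia. reflexivity.
Qed.

Lemma sum1_ext d (f g : nat -> R) :
  (forall i, (1 <= i <= d)%nat -> f i = g i) -> sum1 d f = sum1 d g.
Proof.
  induction d as [|d IH]; simpl; intros H; auto.
  rewrite IH by (intros; apply H; lia). rewrite H by lia. reflexivity.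
Qed.

Lemma nsum_ext d (f g : nat -> nat) :
  (forall i, (1 <= i <= d)%nat -> f i = g i) -> nsum d f = nsum d g.
Proof.
  induction d as [|d IH]; simpl; intros H; auto.
  rewrite IH by (intros; apply H; lia). rewrite H by lia. reflexivity.
Qed.

Lemma prod1_one d : prod1 d (fun _ => 1) = 1.
Proof. induction d as [|d IH]; simpl; auto. rewrite IH; ring. Qed.

Lemma sum1_zero d : sum1 d (fun _ => 0) = 0.
Proof. induction d as [|d IH]; simpl; auto. rewrite IH; ring. Qed.

Lemma sum1_plus d (f g : nat -> R) : sum1 d (fun j => f j + g j) = sum1 d f + sum1 d g.
Proof. induction d as [|d IH]; simpl; [ring | rewrite IH; ring]. Qed.

Lemma sum1_minus d (f g : nat -> R) : sum1 d (fun j => f j - g j) = sum1 d f - sum1 d g.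
Proof. induction d as [|d IH]; simpl; [ring | rewrite IH; ring]. Qed.

Lemma sum1_mult_r d (f : nat -> R) (c : R) : sum1 d (fun j => f j * c) = sum1 d f * c.
Proof. induction d as [|d IH]; simpl; [ring | rewrite IH; ring]. Qed.

Lemma sum1_INR d (f : nat -> nat) : sum1 d (fun j => INR (f j)) = INR (nsum d f).
Proof. induction d as [|d IH]; simpl; auto. rewrite IH, plus_INR; ring. Qed.

Lemma sum1_delta d m (g : nat -> R) : (1 <= m)%nat ->
  sum1 d (fun j => if Nat.eqb m j then g j else 0) = if Nat.leb m d then g m else 0.
Proof.
  intros Hm. induction d as [|d IH]; simpl sum1.
  - destruct m; [lia | reflexivity].
  - rewrite IH. destruct (Nat.eqb_spec m (S d)) as [->|Hne].
    + rewrite (proj2 (Nat.leb_gt (S d) d)) by lia. rewrite Nat.leb_refl. ring.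
    + destruct (Nat.leb_spec m d), (Nat.leb_spec m (S d)); try lia; ring.
Qed.

Lemma nsum_zero d (f : nat -> nat) :
  nsum d f = 0%nat -> forall j, (1 <= j <= d)%nat -> f j = 0%nat.
Proof.
  induction d as [|d IH]; simpl; intros H j Hj; [lia|].
  destruct (Nat.eq_dec j (S d)) as [->|Hne]; [lia|]. apply IH; lia.
Qed.

Lemma nsum_shift d (f : nat -> nat) :
  (f 1%nat + nsum d (fun j => f (S j)) = nsum d f + f (S d))%nat.
Proof. induction d; simpl; lia. Qed.

Lemma prod1_extract d j (f : nat -> R) : (1 <= j <= d)%nat ->
  prod1 d f = f j * prod1 d (fun i => if Nat.eqb i j then 1 else f i).
Proof.
  induction d as [|d IH]; intros Hj; [lia|]. cbn [prod1].
  destruct (Nat.eq_dec j (S d)) as [->|Hne].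
  - rewrite Nat.eqb_refl.
    rewrite (prod1_ext d (fun i => if Nat.eqb i (S d) then 1 else f i) f); [ring|].
    intros i Hi. destruct (Nat.eqb_spec i (S d)); [lia | auto].
  - rewrite IH by lia. destruct (Nat.eqb_spec (S d) j); [lia|]. ring.
Qed.

Lemma nsum_extract d j (f : nat -> nat) : (1 <= j <= d)%nat ->
  nsum d f = (f j + nsum d (fun i => if Nat.eqb i j then 0 else f i))%nat.
Proof.
  induction d as [|d IH]; intros Hj; [lia|]. cbn [nsum].
  destruct (Nat.eq_dec j (S d)) as [->|Hne].
  - rewrite Nat.eqb_refl.
    rewrite (nsum_ext d (fun i => if Nat.eqb i (S d) then 0%nat else f i) f); [lia|].
    intros i Hi. destruct (Nat.eqb_spec i (S d)); [lia | auto].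
  - rewrite IH by lia. destruct (Nat.eqb_spec (S d) j); [lia|]. lia.
Qed.

Lemma prod1_extract2 d j (f : nat -> R) : (1 <= j)%nat -> (S j <= d)%nat ->
  prod1 d f = f j * f (S j) *
    prod1 d (fun i => if Nat.eqb i j then 1 else if Nat.eqb i (S j) then 1 else f i).
Proof.
  intros H1 H2. rewrite (prod1_extract d j), (prod1_extract d (S j)) by lia.
  destruct (Nat.eqb_spec (S j) j); [lia|].
  rewrite (prod1_ext d (fun i => if Nat.eqb i (S j) then 1 else if Nat.eqb i j then 1 else f i)
             (fun i => if Nat.eqb i j then 1 else if Nat.eqb i (S j) then 1 else f i)); [ring|].
  intros i _. destruct (Nat.eqb_spec i j), (Nat.eqb_spec i (S j)); auto.
Qed.

Lemma nsum_extract2 d j (f : nat -> nat) : (1 <= j)%nat -> (S j <= d)%nat ->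
  nsum d f = (f j + f (S j) +
    nsum d (fun i => if Nat.eqb i j then 0 else if Nat.eqb i (S j) then 0 else f i))%nat.
Proof.
  intros H1 H2. rewrite (nsum_extract d j), (nsum_extract d (S j)) by lia.
  destruct (Nat.eqb_spec (S j) j); [lia|].
  rewrite (nsum_ext d (fun i => if Nat.eqb i (S j) then 0%nat else if Nat.eqb i j then 0%nat else f i)
             (fun i => if Nat.eqb i j then 0%nat else if Nat.eqb i (S j) then 0%nat else f i)); [lia|].
  intros i _. destruct (Nat.eqb_spec i j), (Nat.eqb_spec i (S j)); auto.
Qed.

(* Peeling the first factor: (a)_{m+1} = a (a-1)_m; together with the
   definitional (a)_{m+1} = (a)_m (a-m) this gives a (a-1)_m = (a)_m (a-m). *)
Lemma ffact_S_l (a : R) m : ffact a (S m) = a * ffact (a - 1) m.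
Proof.
  induction m as [|m IH]; [simpl; ring|].
  cbn [ffact] in *. rewrite IH, S_INR. ring.
Qed.

Lemma ffact_succ_arg (a : R) m : ffact (a + 1) m = ffact a m + INR m * ffact a (m - 1).
Proof.
  destruct m as [|m]; [simpl; ring|].
  rewrite ffact_S_l. replace (a + 1 - 1) with a by ring.
  replace (S m - 1)%nat with m by lia. cbn [ffact]. rewrite S_INR. ring.
Qed.

(** * The falling-factorial moment functional and its increments *)

Definition ffmoment (d : nat) (k : nat -> nat) (y : nat -> R) : R :=
  prod1 d (fun i => ffact (y i) (k i)).

(* New root neighbour of degree 1. *)
Definition add_leaf (y : nat -> R) : nat -> R :=
  fun i => y i + if Nat.eqb 1 i then 1 else 0.

(* A root neighbour of degree j becomes of degree j+1. *)
Definition promote (j : nat) (y : nat -> R) : nat -> R :=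
  fun i => y i - (if Nat.eqb j i then 1 else 0) + (if Nat.eqb (S j) i then 1 else 0).

Definition lower_first (k : nat -> nat) : nat -> nat :=
  fun i => if Nat.eqb i 1 then (k i - 1)%nat else k i.

Definition transfer (j : nat) (k : nat -> nat) : nat -> nat :=
  fun i => if Nat.eqb i j then S (k i) else if Nat.eqb i (S j) then (k i - 1)%nat else k i.

Lemma ffmoment_ext d k (y z : nat -> R) :
  (forall i, (1 <= i <= d)%nat -> y i = z i) -> ffmoment d k y = ffmoment d k z.
Proof. intros H. apply prod1_ext. intros i Hi. rewrite H; auto. Qed.

Lemma ffmoment_add_leaf d k (y : nat -> R) : (1 <= d)%nat ->
  ffmoment d k (add_leaf y) - ffmoment d k y = INR (k 1%nat) * ffmoment d (lower_first k) y.
Proof.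
  intros Hd. unfold ffmoment.
  rewrite (prod1_extract d 1 (fun i => ffact (add_leaf y i) (k i))),
          (prod1_extract d 1 (fun i => ffact (y i) (k i))),
          (prod1_extract d 1 (fun i => ffact (y i) (lower_first k i))) by lia.
  set (Rest := prod1 d (fun i => if Nat.eqb i 1 then 1 else ffact (y i) (k i))).
  assert (E1 : prod1 d (fun i => if Nat.eqb i 1 then 1 else ffact (add_leaf y i) (k i)) = Rest).
  { apply prod1_ext. intros i _. unfold add_leaf.
    destruct (Nat.eqb_spec i 1); auto.
    destruct (Nat.eqb_spec 1 i); [lia|]. rewrite Rplus_0_r. reflexivity. }
  assert (E2 : prod1 d (fun i => if Nat.eqb i 1 then 1 else ffact (y i) (lower_first k i)) = Rest).
  { apply prod1_ext. intros i _. unfold lower_first. destruct (Nat.eqb i 1); auto. }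
  rewrite E1, E2. unfold add_leaf, lower_first. rewrite Nat.eqb_refl, ffact_succ_arg. ring.
Qed.

Lemma ffmoment_promote_inner d k (y : nat -> R) j : (1 <= j)%nat -> (S j <= d)%nat ->
  y j * (ffmoment d k (promote j y) - ffmoment d k y)
  = INR (k (S j)) * ffmoment d (transfer j k) y - INR (k j) * ffmoment d k y.
Proof.
  intros H1 H2. unfold ffmoment.
  rewrite (prod1_extract2 d j (fun i => ffact (promote j y i) (k i))),
          (prod1_extract2 d j (fun i => ffact (y i) (k i))),
          (prod1_extract2 d j (fun i => ffact (y i) (transfer j k i))) by lia.
  set (Rest := prod1 d (fun i => if Nat.eqb i j then 1 else if Nat.eqb i (S j) then 1
                                 else ffact (y i) (k i))).
  assert (E1 : prod1 d (fun i => if Nat.eqb i j then 1 else if Nat.eqb i (S j) then 1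
                                 else ffact (promote j y i) (k i)) = Rest).
  { apply prod1_ext. intros i _. unfold promote.
    destruct (Nat.eqb_spec i j); auto. destruct (Nat.eqb_spec i (S j)); auto.
    destruct (Nat.eqb_spec j i); [lia|]. destruct (Nat.eqb_spec (S j) i); [lia|].
    f_equal. ring. }
  assert (E2 : prod1 d (fun i => if Nat.eqb i j then 1 else if Nat.eqb i (S j) then 1
                                 else ffact (y i) (transfer j k i)) = Rest).
  { apply prod1_ext. intros i _. unfold transfer.
    destruct (Nat.eqb_spec i j); auto. destruct (Nat.eqb_spec i (S j)); auto. }
  rewrite E1, E2. clearbody Rest. unfold promote, transfer. rewrite !Nat.eqb_refl.
  rewrite (proj2 (Nat.eqb_neq (S j) j)), (proj2 (Nat.eqb_neq j (S j))) by lia.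
  replace (y j - 1 + 0) with (y j - 1) by ring.
  replace (y (S j) - 0 + 1) with (y (S j) + 1) by ring.
  pose proof (ffact_S_l (y j) (k j)) as Hpeel. cbn [ffact] in Hpeel |- *. symmetry in Hpeel.
  rewrite ffact_succ_arg. ring [Hpeel].
Qed.

(* At the top index the promoted vertex leaves the range 1..d. *)
Lemma ffmoment_promote_last d k (y : nat -> R) : (1 <= d)%nat ->
  y d * (ffmoment d k (promote d y) - ffmoment d k y) = - INR (k d) * ffmoment d k y.
Proof.
  intros H1. unfold ffmoment.
  rewrite (prod1_extract d d (fun i => ffact (promote d y i) (k i))),
          (prod1_extract d d (fun i => ffact (y i) (k i))) by lia.
  set (Rest := prod1 d (fun i => if Nat.eqb i d then 1 else ffact (y i) (k i))).
  assert (E1 : prod1 d (fun i => if Nat.eqb i d then 1 else ffact (promote d y i) (k i)) = Rest).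
  { apply prod1_ext. intros i Hi. unfold promote.
    destruct (Nat.eqb_spec i d); auto.
    destruct (Nat.eqb_spec d i); [lia|]. destruct (Nat.eqb_spec (S d) i); [lia|].
    f_equal. ring. }
  rewrite E1. clearbody Rest. unfold promote. rewrite !Nat.eqb_refl.
  rewrite (proj2 (Nat.eqb_neq (S d) d)) by lia.
  replace (y d - 1 + 0) with (y d - 1) by ring.
  pose proof (ffact_S_l (y d) (k d)) as Hpeel. cbn [ffact] in Hpeel. symmetry in Hpeel.
  ring [Hpeel].
Qed.

Lemma ffmoment_promote d k (y : nat -> R) j : (1 <= j <= d)%nat -> k (S d) = 0%nat ->
  y j * (ffmoment d k (promote j y) - ffmoment d k y)
  = INR (k (S j)) * ffmoment d (transfer j k) y - INR (k j) * ffmoment d k y.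
Proof.
  intros Hj Hk. destruct (Nat.eq_dec j d) as [->|Hne].
  - rewrite ffmoment_promote_last, Hk by lia. simpl INR. ring.
  - apply ffmoment_promote_inner; lia.
Qed.

(** * The profile of T_n and its change in one step *)

Definition profile (n : nat) (s : list nat) : nat -> R := fun i => INR (X n s i).

Lemma count_bump_notin (dg : nat -> nat) p i (L : list nat) : ~ In p L ->
  length (filter (fun v => Nat.eqb (dg v + if Nat.eqb p v then 1 else 0) i) L)
  = length (filter (fun v => Nat.eqb (dg v) i) L).
Proof.
  intros H. f_equal. apply filter_ext_in. intros a Ha.
  destruct (Nat.eqb_spec p a); [subst; contradiction|]. rewrite Nat.add_0_r. reflexivity.
Qed.

Lemma count_bump_in (dg : nat -> nat) p i (L : list nat) : In p L -> NoDup L ->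
  INR (length (filter (fun v => Nat.eqb (dg v + if Nat.eqb p v then 1 else 0) i) L))
  = INR (length (filter (fun v => Nat.eqb (dg v) i) L))
    - (if Nat.eqb (dg p) i then 1 else 0) + (if Nat.eqb (S (dg p)) i then 1 else 0).
Proof.
  induction L as [|a L IH]; intros Hin Hnd; [destruct Hin|].
  inversion Hnd as [|a0 l0 Hna Hnd' E]; subst.
  destruct (Nat.eqb_spec p a) as [<-|Hne].
  - cbn [filter]. rewrite Nat.eqb_refl.
    pose proof (count_bump_notin dg p i L Hna) as C.
    replace (dg p + 1)%nat with (S (dg p)) by lia.
    destruct (Nat.eqb (S (dg p)) i), (Nat.eqb (dg p) i);
      cbn [length]; rewrite ?S_INR, C; ring.
  - destruct Hin as [Hin|Hin]; [congruence|].
    cbn [filter]. rewrite (proj2 (Nat.eqb_neq p a) Hne), Nat.add_0_r.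
    destruct (Nat.eqb (dg a) i); cbn [length]; rewrite ?S_INR, IH by auto; ring.
Qed.

Lemma sum_by_degree (dg : nat -> nat) (g : nat -> R) d (L : list nat) :
  (forall v, In v L -> (1 <= dg v)%nat) -> (forall j, (d < j)%nat -> g j = 0) ->
  sumR (map (fun v => g (dg v)) L) =
  sum1 d (fun j => INR (length (filter (fun v => Nat.eqb (dg v) j) L)) * g j).
Proof.
  intros Hpos Hvan. induction L as [|a L IH].
  - transitivity (sum1 d (fun _ => 0)); [rewrite sum1_zero; reflexivity|].
    apply sum1_ext. intros; simpl; ring.
  - rewrite (sum1_ext d _ (fun j => (if Nat.eqb (dg a) j then g j else 0) +
        INR (length (filter (fun v => Nat.eqb (dg v) j) L)) * g j)).
    + rewrite sum1_plus, sum1_delta by (apply Hpos; simpl; auto).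
      cbn [map]. unfold sumR at 1. cbn [fold_right]. fold (sumR (map (fun v => g (dg v)) L)).
      rewrite IH by (intros; apply Hpos; simpl; auto).
      destruct (Nat.leb_spec (dg a) d); [ring|]. rewrite Hvan by lia. ring.
    + intros j _. cbn [filter]. destruct (Nat.eqb (dg a) j); cbn [length]; rewrite ?S_INR; ring.
Qed.

Lemma X_app n s p i : length s = n ->
  X (S n) (s ++ [p]) i =
  (length (filter (fun v => Nat.eqb (deg n s v + if Nat.eqb p v then 1 else 0) i) (rootNbrs n s))
   + length (filter (fun v => Nat.eqb (deg (S n) (s ++ [p]) v) i)
                    (if Nat.eqb p 0 then [S n] else [])))%nat.
Proof.
  intros Hl. unfold X. rewrite (rootNbrs_app n), filter_app, length_app by auto.
  f_equal. f_equal. apply filter_ext_in. intros a _. rewrite (deg_app n) by auto. reflexivity.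
Qed.

Lemma profile_attach_root n s : In s (histories n) ->
  forall i, profile (S n) (s ++ [0%nat]) i = add_leaf (profile n s) i.
Proof.
  intros H i. destruct (history_valid n s H) as [Hl _].
  unfold profile, add_leaf. rewrite (X_app n) by auto. rewrite plus_INR. f_equal.
  - f_equal. unfold X. f_equal. apply filter_ext_in. intros a Ha.
    apply rootNbrs_in in Ha. destruct Ha as [Ha _]. apply in_seq in Ha.
    destruct a as [|a]; [lia|]. cbn [Nat.eqb]. rewrite Nat.add_0_r. reflexivity.
  - cbn [filter Nat.eqb]. rewrite (deg_app n), (deg_fresh n s H) by auto.
    replace (Nat.eqb 0 (S n)) with false by reflexivity. rewrite Nat.add_0_r.
    destruct i as [|[|i]]; reflexivity.
Qed.

Lemma ffmoment_attach_nonroot d k n s p : In s (histories n) -> In p (seq 1 n) ->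
  ffmoment d k (profile (S n) (s ++ [p])) =
  if Nat.eqb (parent s p) 0 then ffmoment d k (promote (deg n s p) (profile n s))
  else ffmoment d k (profile n s).
Proof.
  intros H Hp. destruct (history_valid n s H) as [Hl _].
  assert (Hp0 : Nat.eqb p 0 = false) by (apply Nat.eqb_neq; apply in_seq in Hp; lia).
  assert (EX : forall i, X (S n) (s ++ [p]) i =
     length (filter (fun v => Nat.eqb (deg n s v + if Nat.eqb p v then 1 else 0) i)
                    (rootNbrs n s))).
  { intros i. rewrite (X_app n), Hp0 by auto. simpl. lia. }
  destruct (Nat.eqb_spec (parent s p) 0) as [E|E];
    apply ffmoment_ext; intros i _; unfold profile; rewrite EX.
  - rewrite count_bump_in; [reflexivity | apply rootNbrs_in; auto | apply rootNbrs_nodup].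
  - rewrite count_bump_notin; [reflexivity|]. intros Hin. apply rootNbrs_in in Hin. tauto.
Qed.

Lemma sum_over_parents d k n s : In s (histories n) ->
  sumR (map (fun p => ffmoment d k (profile (S n) (s ++ [p]))) (seq 0 (S n))) =
  ffmoment d k (add_leaf (profile n s)) + INR n * ffmoment d k (profile n s)
  + sumR (map (fun v => ffmoment d k (promote (deg n s v) (profile n s))
                        - ffmoment d k (profile n s)) (rootNbrs n s)).
Proof.
  intros H. replace (seq 0 (S n)) with (0%nat :: seq 1 n) by reflexivity.
  cbn [map]. unfold sumR at 1. cbn [fold_right].
  fold (sumR (map (fun p => ffmoment d k (profile (S n) (s ++ [p]))) (seq 1 n))).
  rewrite (ffmoment_ext d k _ (add_leaf (profile n s))) by (intros; apply profile_attach_root; auto).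
  rewrite (sumR_ext_in _ (fun p => if Nat.eqb (parent s p) 0
                                   then ffmoment d k (promote (deg n s p) (profile n s))
                                   else ffmoment d k (profile n s)))
    by (intros; apply ffmoment_attach_nonroot; auto).
  rewrite sumR_if, length_seq. unfold rootNbrs, nonroot. ring.
Qed.

Lemma ffmoment_step d k n s : (1 <= d)%nat -> k (S d) = 0%nat -> In s (histories n) ->
  sumR (map (fun p => ffmoment d k (profile (S n) (s ++ [p]))) (seq 0 (S n))) =
  INR (S n) * ffmoment d k (profile n s)
  + INR (k 1%nat) * ffmoment d (lower_first k) (profile n s)
  + sum1 d (fun j => INR (k (S j)) * ffmoment d (transfer j k) (profile n s))
  - sum1 d (fun j => INR (k j)) * ffmoment d k (profile n s).
Proof.
  intros Hd Hk H. rewrite sum_over_parents by auto. set (y := profile n s).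
  rewrite (sum_by_degree (deg n s) (fun j => ffmoment d k (promote j y) - ffmoment d k y) d).
  - change (fun j => INR (length (filter (fun v => Nat.eqb (deg n s v) j) (rootNbrs n s))) *
                     (ffmoment d k (promote j y) - ffmoment d k y))
      with (fun j => y j * (ffmoment d k (promote j y) - ffmoment d k y)).
    rewrite (sum1_ext d _ (fun j => INR (k (S j)) * ffmoment d (transfer j k) y
                                    - INR (k j) * ffmoment d k y))
      by (intros; apply ffmoment_promote; auto).
    rewrite sum1_minus, sum1_mult_r.
    pose proof (ffmoment_add_leaf d k y Hd). rewrite S_INR. lra.
  - intros v Hv. apply deg_nonroot_pos. apply rootNbrs_in in Hv. destruct Hv as [Hv _].
    apply in_seq in Hv. lia.
  - intros j Hj. rewrite (ffmoment_ext d k (promote j y) y); [ring|].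
    intros i Hi. unfold promote.
    destruct (Nat.eqb_spec j i), (Nat.eqb_spec (S j) i); try lia. ring.
Qed.

Definition moment (d : nat) (k : nat -> nat) (n : nat) : R :=
  expect n (fun s => ffmoment d k (profile n s)).

Lemma expect_sum1 n d (h : nat -> list nat -> R) :
  expect n (fun s => sum1 d (fun j => h j s)) = sum1 d (fun j => expect n (h j)).
Proof.
  induction d as [|d IH]; simpl.
  - unfold expect. rewrite (sumR_const 0). unfold Rdiv. ring.
  - rewrite expect_plus, IH. reflexivity.
Qed.

Lemma moment_rec d k n : (1 <= d)%nat -> k (S d) = 0%nat ->
  moment d k (S n) = moment d k n + / INR (S n) *
    (INR (k 1%nat) * moment d (lower_first k) n
     + sum1 d (fun j => INR (k (S j)) * moment d (transfer j k) n)
     - sum1 d (fun j => INR (k j)) * moment d k n).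
Proof.
  intros Hd Hk. unfold moment. rewrite expect_S.
  rewrite (expect_ext n _ (fun s => / INR (S n) *
     (INR (S n) * ffmoment d k (profile n s)
      + INR (k 1%nat) * ffmoment d (lower_first k) (profile n s)
      + sum1 d (fun j => INR (k (S j)) * ffmoment d (transfer j k) (profile n s))
      - sum1 d (fun j => INR (k j)) * ffmoment d k (profile n s))))
    by (intros s Hs; rewrite ffmoment_step; auto).
  rewrite expect_scal, expect_minus, !expect_plus, !expect_scal, expect_sum1.
  rewrite (sum1_ext d _ (fun j => INR (k (S j)) *
                                  expect n (fun s => ffmoment d (transfer j k) (profile n s))))
    by (intros; apply expect_scal).
  field. apply not_0_INR. lia.
Qed.

(** * An averaging lemma *)

Section Averaging.

(* x is updated towards y with step K/(n+1): the discrete analogue of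
   x' = K (y - x)/t, whose solutions follow the limit of y. *)
Variables (x y : nat -> R) (K : nat) (l : R).
Hypothesis K_pos : (1 <= K)%nat.
Hypothesis x_rec : forall n, x (S n) = x n + / INR (S n) * (INR K * y n - INR K * x n).

Lemma averaging_contraction n eta : (K <= n)%nat -> Rabs (y n - l) <= eta ->
  INR (S n) * Rmax 0 (Rabs (x (S n) - l) - eta) <= INR n * Rmax 0 (Rabs (x n - l) - eta).
Proof.
  intros HKn Hy. pose proof (x_rec n) as Hrec. rewrite S_INR in *.
  assert (HK1 : 1 <= INR K) by (apply (le_INR 1); lia).
  assert (HKn' : INR K <= INR n) by (apply le_INR; lia).
  set (a := INR n) in *. set (c := INR K) in *.
  assert (E : (a + 1) * (x (S n) - l) = (a + 1 - c) * (x n - l) + c * (y n - l)).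
  { rewrite Hrec. field. lra. }
  assert (Habs : (a + 1) * Rabs (x (S n) - l) <= (a + 1 - c) * Rabs (x n - l) + c * eta).
  { rewrite <- (Rabs_right (a + 1)) at 1 by lra. rewrite <- Rabs_mult, E.
    eapply Rle_trans; [apply Rabs_triang|].
    rewrite !Rabs_mult, (Rabs_right (a + 1 - c)), (Rabs_right c) by lra.
    apply Rplus_le_compat_l, Rmult_le_compat_l; lra. }
  assert (Hb := Rmax_r 0 (Rabs (x n - l) - eta)).
  assert (Hb0 := Rmax_l 0 (Rabs (x n - l) - eta)).
  set (b := Rmax 0 (Rabs (x n - l) - eta)) in *.
  assert (H1 : (a + 1 - c) * (Rabs (x n - l) - eta) <= (a + 1 - c) * b)
    by (apply Rmult_le_compat_l; lra).
  assert (H2 : (a + 1 - c) * b <= a * b) by (apply Rmult_le_compat_r; lra).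
  assert (H3 : 0 <= a * b) by (apply Rmult_le_pos; lra).
  unfold Rmax at 1. destruct (Rle_dec 0 (Rabs (x (S n) - l) - eta)); lra.
Qed.

Lemma decay_of_bounded_multiple (b : nat -> R) (C : R) (N : nat) :
  (forall n, 0 <= b n) -> (forall n, (N <= n)%nat -> INR n * b n <= C) ->
  forall eta, 0 < eta -> exists M, forall n, (M <= n)%nat -> b n < eta.
Proof.
  intros Hb0 HC eta Heta.
  destruct (INR_archimed eta C Heta) as [M HM].
  exists (Nat.max N M). intros n Hn.
  assert (HnC := HC n ltac:(lia)).
  assert (HMn : INR M <= INR n) by (apply le_INR; lia).
  destruct (Rlt_or_le (b n) eta) as [Hlt|Hge]; [exact Hlt|].
  assert (INR n * eta <= INR n * b n) by (apply Rmult_le_compat_l; [apply pos_INR | lra]).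
  assert (INR M * eta <= INR n * eta) by (apply Rmult_le_compat_r; lra).
  lra.
Qed.

Lemma averaging_limit : Un_cv y l -> Un_cv x l.
Proof.
  intros Hy eps Heps.
  destruct (Hy (eps / 2)) as [N1 HN1]; [lra|].
  set (N := Nat.max N1 K).
  set (b := fun n => Rmax 0 (Rabs (x n - l) - eps / 2)).
  assert (Hb0 : forall n, 0 <= b n) by (intros; apply Rmax_l).
  assert (Hmono : forall t, INR (N + t) * b (N + t)%nat <= INR N * b N).
  { induction t as [|t IH]; [rewrite Nat.add_0_r; lra|].
    replace (N + S t)%nat with (S (N + t)) by lia.
    eapply Rle_trans; [|exact IH].
    apply averaging_contraction; [lia|]. apply Rlt_le, HN1. lia. }
  destruct (decay_of_bounded_multiple b (INR N * b N) N Hb0) with (eta := eps / 2)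
    as [M HM]; [|lra|].
  { intros n Hn. replace n with (N + (n - N))%nat by lia. apply Hmono. }
  exists M. intros n Hn. specialize (HM n Hn).
  assert (Hr : Rabs (x n - l) - eps / 2 <= b n) by apply Rmax_r.
  unfold R_dist. lra.
Qed.

End Averaging.

Lemma Un_cv_const (c : R) : Un_cv (fun _ => c) c.
Proof.
  intros eps He. exists 0%nat. intros n _. unfold R_dist.
  replace (c - c) with 0 by ring. rewrite Rabs_R0. lra.
Qed.

Lemma Un_cv_scaled (c : R) (u : nat -> R) :
  c = 0 \/ Un_cv u 1 -> Un_cv (fun n => c * u n) c.
Proof.
  intros [->|Hu].
  - apply (Un_cv_ext (fun _ => 0)); [intros; ring | apply Un_cv_const].
  - pose proof (CV_mult _ _ c 1 (Un_cv_const c) Hu) as H.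
    rewrite Rmult_1_r in H. exact H.
Qed.

Lemma sum1_cv d (u : nat -> nat -> R) (l : nat -> R) :
  (forall j, (1 <= j <= d)%nat -> Un_cv (u j) (l j)) ->
  Un_cv (fun n => sum1 d (fun j => u j n)) (sum1 d l).
Proof.
  induction d as [|d IH]; intros H; simpl.
  - apply Un_cv_const.
  - apply CV_plus; [apply IH; intros; apply H | apply H]; lia.
Qed.

(** * Induction on the weight of the index vector *)

Definition supported (d : nat) (k : nat -> nat) : Prop :=
  forall i, (i = 0 \/ d < i)%nat -> k i = 0%nat.

Definition weight (d : nat) (k : nat -> nat) : nat := nsum d (fun i => i * k i)%nat.

Lemma supported_lower_first d k : supported d k -> supported d (lower_first k).
Proof. intros Hs i Hi. unfold lower_first. rewrite (Hs i Hi). destruct (Nat.eqb i 1); auto. Qed.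

Lemma supported_transfer d k j : (1 <= j)%nat -> supported d k -> k (S j) <> 0%nat ->
  supported d (transfer j k).
Proof.
  intros Hj Hs HkS i Hi. unfold transfer.
  destruct (Nat.eqb_spec i j) as [->|].
  - exfalso. destruct Hi; [lia | apply HkS, Hs; lia].
  - rewrite (Hs i Hi). destruct (Nat.eqb i (S j)); auto.
Qed.

Lemma weight_lower_first d k : (1 <= d)%nat -> k 1%nat <> 0%nat ->
  (weight d (lower_first k) < weight d k)%nat.
Proof.
  intros Hd Hk. unfold weight.
  rewrite (nsum_extract d 1 (fun i => i * lower_first k i)%nat),
          (nsum_extract d 1 (fun i => i * k i)%nat) by lia.
  rewrite (nsum_ext d (fun i => if Nat.eqb i 1 then 0%nat else (i * lower_first k i)%nat)
                      (fun i => if Nat.eqb i 1 then 0%nat else (i * k i)%nat)).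
  - unfold lower_first at 1. cbn [Nat.eqb]. lia.
  - intros i _. unfold lower_first. destruct (Nat.eqb i 1); reflexivity.
Qed.

Lemma weight_transfer d k j : (1 <= j)%nat -> (S j <= d)%nat -> k (S j) <> 0%nat ->
  (weight d (transfer j k) < weight d k)%nat.
Proof.
  intros Hj HjS Hk. unfold weight.
  rewrite (nsum_extract2 d j (fun i => i * transfer j k i)%nat),
          (nsum_extract2 d j (fun i => i * k i)%nat) by lia.
  rewrite (nsum_ext d
    (fun i => if Nat.eqb i j then 0%nat else if Nat.eqb i (S j) then 0%nat else (i * transfer j k i)%nat)
    (fun i => if Nat.eqb i j then 0%nat else if Nat.eqb i (S j) then 0%nat else (i * k i)%nat)).
  - unfold transfer. rewrite Nat.eqb_refl, (proj2 (Nat.eqb_neq (S j) j)), Nat.eqb_refl by lia.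
    nia.
  - intros i _. unfold transfer.
    destruct (Nat.eqb i j); auto. destruct (Nat.eqb i (S j)); auto.
Qed.

Lemma moment_trivial d k : (forall j, (1 <= j <= d)%nat -> k j = 0%nat) ->
  Un_cv (moment d k) 1.
Proof.
  intros H. apply (Un_cv_ext (fun _ => 1)); [|apply Un_cv_const].
  intros n. unfold moment. rewrite <- (expect_one n). apply expect_ext. intros s _.
  unfold ffmoment. rewrite <- (prod1_one d). apply prod1_ext.
  intros i Hi. rewrite H by auto. reflexivity.
Qed.

(* The inductive step: if all moments of smaller weight tend to 1, so does
   F_n(k), by the averaging lemma applied to the recurrence with K = |k|. *)
Lemma moment_limit_step d k : (1 <= d)%nat -> supported d k -> nsum d k <> 0%nat ->
  (forall k', supported d k' -> (weight d k' < weight d k)%nat -> Un_cv (moment d k') 1) ->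
  Un_cv (moment d k) 1.
Proof.
  intros Hd Hs HK IH.
  assert (HkS : k (S d) = 0%nat) by (apply Hs; lia).
  apply (averaging_limit _ (fun n => (INR (k 1%nat) * moment d (lower_first k) n
           + sum1 d (fun j => INR (k (S j)) * moment d (transfer j k) n)) / INR (nsum d k))
           (nsum d k)); [lia | |].
  - intros n. rewrite moment_rec, sum1_INR by auto. field. split; apply not_0_INR; lia.
  - assert (Htotal : INR (nsum d k) = INR (k 1%nat) + sum1 d (fun j => INR (k (S j)))).
    { rewrite sum1_INR, <- plus_INR. f_equal. pose proof (nsum_shift d k). lia. }
    replace 1 with ((INR (k 1%nat) + sum1 d (fun j => INR (k (S j)))) * / INR (nsum d k))
      by (rewrite <- Htotal; field; apply not_0_INR; lia).
    apply CV_mult; [apply CV_plus | apply Un_cv_const].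
    + apply Un_cv_scaled. destruct (Nat.eq_dec (k 1%nat) 0) as [->|Hk1]; [now left | right].
      apply IH; [apply supported_lower_first | apply weight_lower_first]; auto.
    + apply sum1_cv. intros j Hj. apply Un_cv_scaled.
      destruct (Nat.eq_dec (k (S j)) 0) as [->|HkSj]; [now left | right].
      assert (HjS : (S j <= d)%nat).
      { destruct (Nat.le_gt_cases (S j) d); auto. exfalso. apply HkSj, Hs. lia. }
      apply IH; [apply supported_transfer | apply weight_transfer]; auto; lia.
Qed.

Lemma moment_limit d k : (1 <= d)%nat -> supported d k -> Un_cv (moment d k) 1.
Proof.
  intros Hd. remember (weight d k) as m eqn:Hm. revert k Hm.
  induction m as [m IH] using lt_wf_ind. intros k Hm Hs.
  destruct (Nat.eq_dec (nsum d k) 0) as [Hz|Hnz].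
  - apply moment_trivial, nsum_zero, Hz.
  - apply moment_limit_step; auto. intros k' Hs' Hlt. subst m. eapply IH; eauto.
Qed.

Theorem mainTheorem5 (d : nat) (hd : (1 <= d)%nat) (k : nat -> nat) :
  Un_cv (fun n => expect n (fun s => prod1 d (fun i => ffact (INR (X n s i)) (k i)))) 1.
Proof.
  (* Only the values k_1..k_d matter; cut k down to a supported vector. *)
  set (kd := fun i => if (Nat.leb 1 i && Nat.leb i d)%bool then k i else 0%nat).
  apply (Un_cv_ext (moment d kd)).
  - intros n. unfold moment. apply expect_ext. intros s _. unfold ffmoment.
    apply prod1_ext. intros i Hi. unfold kd, profile.
    destruct (Nat.leb_spec 1 i), (Nat.leb_spec i d); try lia. reflexivity.
  - apply moment_limit; [exact hd|]. intros i Hi. unfold kd.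
    destruct (Nat.leb_spec 1 i), (Nat.leb_spec i d); simpl; auto; lia.
Qed.
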